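(* For every $\mathcal{H}\subseteq\{0,1\}^{\mathcal{X}}$: (i) $\operatorname{AL}_{w_1}(\mathcal{H})\ge\operatorname{AL}_{w_2}(\mathcal{H})$ for all $w_1<w_2$; (ii) $\operatorname{AL}_w(\mathcal{H})\ge\min\{w,\operatorname{L}(\mathcal{H})\}$ for all $w\in\mathbb{N}$; (iii) if $\operatorname{L}(\mathcal{H})<\infty$ then $\operatorname{AL}_w(\mathcal{H})=\operatorname{L}(\mathcal{H})$ for all $w\ge\operatorname{L}(\mathcal{H})+1$; (iv) if $\operatorname{L}(\mathcal{H})<\infty$ then $\operatorname{W}(\mathcal{H})\le\operatorname{L}(\mathcal{H})+1$; (v) $\operatorname{W}(\mathcal{H})<\infty$ if and only if $\operatorname{L}(\mathcal{H})<\infty$.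
   Context: AL tree of width $w\in\mathbb{N}=\{1,2,\dots\}$ and depth $d$: a binary string $u$ is an internal node if $|u|<d$ and $u$ has fewer than $w$ ones; the tree assigns $x_u\in\mathcal{X}$ to each internal node. A path is a binary string $\sigma$ whose proper prefixes are all internal nodes but which is not itself one (so $|\sigma|=d$ or $\sigma$ has exactly $w$ ones). The tree is shattered by $\mathcal{H}$ if for every path $\sigma$ some $h\in\mathcal{H}$ satisfies $h(x_{(\sigma_1,\dots,\sigma_{i-1})})=\sigma_i$ for all $i\le|\sigma|$. When $w\ge d$ this is a complete binary (Littlestone) tree of depth $d$. $\operatorname{L}(\mathcal{H})$ (Littlestone dimension) is the largest $d$ such that a complete binary tree of depth $d$ is shattered ($\infty$ if unbounded). $\operatorname{AL}_w(\mathcal{H})$ is the largest $d$ such that an AL tree of width $w$ and depth $d$ is shattered ($\infty$ if unbounded, $0$ if none). The Effective width $\operatorname{W}(\mathcal{H})$ is the smallest $w\in\mathbb{N}$ with $\operatorname{AL}_w(\mathcal{H})<\infty$, and $\infty$ if none exists. *)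

From mathcomp Require Import all_boot.
From Stdlib Require Import Classical ClassicalEpsilon Wf_nat.

Set Implicit Arguments.
Unset Strict Implicit.
Unset Printing Implicit Defensive.

(* Extended naturals: [Some n] = n, [None] = infinity. *)
Definition enat := option nat.

Definition ele (a b : enat) : Prop :=
  match a, b with
  | _, None => True
  | None, Some _ => False
  | Some m, Some n => (m <= n)%N
  end.

Definition emin (a b : enat) : enat :=
  match a, b with
  | None, _ => b
  | _, None => a
  | Some m, Some n => Some (minn m n)
  end.

Definition AL_internal (w d : nat) (u : seq bool) : bool :=
  (size u < d) && (count id u < w).

Definition AL_path (w d : nat) (s : seq bool) : Prop :=
  (forall i, i < size s -> AL_internal w d (take i s)) /\ ~~ AL_internal w d s.

Definition AL_tree (X : Type) (w d : nat) := forall u : seq bool, AL_internal w d u -> X.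

Definition AL_shattered (X : Type) (H : (X -> bool) -> Prop) (w d : nat)
    (T : AL_tree X w d) : Prop :=
  forall s, AL_path w d s ->
    exists h, H h /\
      forall i (Hi : AL_internal w d (take i s)), i < size s ->
        h (T (take i s) Hi) = nth false s i.

Definition L_tree (X : Type) (d : nat) := forall u : seq bool, size u < d -> X.

Definition L_shattered (X : Type) (H : (X -> bool) -> Prop) (d : nat)
    (T : L_tree X d) : Prop :=
  forall s, size s = d ->
    exists h, H h /\
      forall i (Hi : size (take i s) < d), i < size s ->
        h (T (take i s) Hi) = nth false s i.

Lemma largest_exists (P : nat -> Prop) :
  (exists B, forall d, P d -> d <= B) ->
  exists n, (P n \/ (n = 0 /\ forall d, ~ P d)) /\ (forall d, P d -> d <= n).
Proof.
move=> [B]; elim: B => [|B IH] hB.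
  exists 0; split; last by move=> d /hB.
  case: (classic (P 0)) => [p0|np0]; [by left | right; split=> // d pd].
  by have := hB d pd; rewrite leqn0 => /eqP Ed; apply: np0; rewrite -Ed.
case: (classic (P B.+1)) => [pB|npB]; first by exists B.+1; split; [left|].
apply: IH => d pd; have := hB d pd; rewrite leq_eqVlt => /orP[/eqP Ed|] //.
by exfalso; apply: npB; rewrite -Ed.
Qed.

(* largest d with P d; infinity if unbounded; 0 if there is none *)
Definition sup_dim (P : nat -> Prop) : enat :=
  match excluded_middle_informative (exists B, forall d, P d -> d <= B) with
  | left hb => Some (proj1_sig (constructive_indefinite_description _ (largest_exists hb)))
  | right _ => None
  end.

Lemma least_exists (P : nat -> Prop) :
  (exists n, P n) -> exists n, P n /\ (forall m, P m -> n <= m).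
Proof.
move=> hex.
have [n [[Pn hn] _]] :=
  dec_inh_nat_subset_has_unique_least_element P (fun n => classic (P n)) hex.
by exists n; split=> // m /hn /leP.
Qed.

Definition inf_dim (P : nat -> Prop) : enat :=
  match excluded_middle_informative (exists n, P n) with
  | left he => Some (proj1_sig (constructive_indefinite_description _ (least_exists he)))
  | right _ => None
  end.

Definition ALdim (X : Type) (H : (X -> bool) -> Prop) (w : nat) : enat :=
  sup_dim (fun d => exists T : AL_tree X w d, AL_shattered H T).

Definition Ldim (X : Type) (H : (X -> bool) -> Prop) : enat :=
  sup_dim (fun d => exists T : L_tree X d, L_shattered H T).

Definition Wdim (X : Type) (H : (X -> bool) -> Prop) : enat :=
  inf_dim (fun w => 0 < w /\ ALdim H w <> None).

From mathcomp Require Import all_boot.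
From mathcomp Require Import zify.
From Stdlib Require Import Classical ClassicalEpsilon.

Set Implicit Arguments.
Unset Strict Implicit.
Unset Printing Implicit Defensive.

(* Enlarging the width or the depth only adds internal nodes, and every path
   of the smaller AL tree is a prefix of a path of the larger one (pad it with
   zeros, unless its budget of ones is already spent); so a shattered tree
   restricts to a shattered tree of smaller width and depth.  When w >= d the
   budget of ones never binds, so AL trees of width w and depth d are exactly
   the complete binary trees of depth d. *)

Lemma sup_dim_Some (P : nat -> Prop) n : sup_dim P = Some n ->
  (P n \/ n = 0) /\ (forall d, P d -> d <= n).
Proof.
rewrite /sup_dim; case: excluded_middle_informative => // bounded.
case: constructive_indefinite_description => m /= [Pm le_m] [<-].
by split=> //; case: Pm => [|[]]; [left | right].
Qed.

Lemma sup_dim_None (P : nat -> Prop) : sup_dim P = None ->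
  forall B, exists2 d, P d & B < d.
Proof.
rewrite /sup_dim; case: excluded_middle_informative => // unbounded _ B.
apply: NNPP => noP; apply: unbounded; exists B => d Pd.
by rewrite leqNgt; apply/negP => ltBd; apply: noP; exists d.
Qed.

Lemma sup_dim_eq (P : nat -> Prop) n :
  (forall d, P d -> d <= n) -> n = 0 \/ P n -> sup_dim P = Some n.
Proof.
move=> le_n Pn; case E: (sup_dim P) => [m|]; last first.
  by have [d /le_n] := sup_dim_None E n; rewrite leqNgt => /negP.
have [Pm le_m] := sup_dim_Some E; congr Some; apply/eqP; rewrite eqn_leq.
case: Pm => [/le_n -> | m0]; first by case: Pn => [-> | /le_m ->].
by case: Pn => [-> | /le_m]; rewrite m0 // => ->.
Qed.

Lemma sup_dim_le (P1 P2 : nat -> Prop) :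
  (forall d, P2 d -> P1 d) -> ele (sup_dim P2) (sup_dim P1).
Proof.
move=> P21; case E1: (sup_dim P1) => [n1|]; last by case: (sup_dim P2).
have [_ le_n1] := sup_dim_Some E1.
case E2: (sup_dim P2) => [n2|] /=.
  by have [[/P21 /le_n1 le_n21 | ->] _] := sup_dim_Some E2.
by have [d /P21 /le_n1] := sup_dim_None E2 n1; rewrite leqNgt => /negP.
Qed.

Lemma inf_dim_le (P : nat -> Prop) n : P n -> ele (inf_dim P) (Some n).
Proof.
move=> Pn; rewrite /inf_dim; case: excluded_middle_informative => [ex | []].
  by case: constructive_indefinite_description => m /= [_]; apply.
by exists n.
Qed.

Lemma inf_dim_neq_None (P : nat -> Prop) : inf_dim P <> None -> exists n, P n.
Proof. by rewrite /inf_dim; case: excluded_middle_informative. Qed.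

Section Shattering.

Variables (X : Type) (H : (X -> bool) -> Prop).

(* [AL_path w d] and [AL_shattered] are [node_path] and [shatters] for
   [I := AL_internal w d], up to conversion; complete binary trees of depth [d]
   are the case [I u := size u < d]. *)
Definition node_path (I : seq bool -> bool) (s : seq bool) : Prop :=
  (forall i, i < size s -> I (take i s)) /\ ~~ I s.

Definition shatters (I : seq bool -> bool) (T : forall u, I u -> X) : Prop :=
  forall s, node_path I s -> exists h, H h /\
    forall i (Hi : I (take i s)), i < size s ->
      h (T (take i s) Hi) = nth false s i.

Lemma label_irrelevance (I : seq bool -> bool) (T : forall u, I u -> X)
    u v (Hu : I u) (Hv : I v) :
  u = v -> T u Hu = T v Hv.
Proof. by move=> euv; subst v; rewrite (bool_irrelevance Hu Hv). Qed.

Lemma shatters_restrict (I1 I2 : seq bool -> bool)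
    (sub12 : forall u, I1 u -> I2 u) (T : forall u, I2 u -> X) :
  (forall s, node_path I1 s -> exists t, node_path I2 (s ++ t)) ->
  shatters T -> shatters (fun u Hu => T u (sub12 u Hu)).
Proof.
move=> extend shT s path_s; have [t path_st] := extend s path_s.
have [h [Hh hT]] := shT _ path_st; exists h; split=> // i Hi lt_is.
have lt_ist : i < size (s ++ t) by rewrite size_cat ltn_addr.
rewrite (label_irrelevance T _ (path_st.1 i lt_ist)); last first.
  by rewrite takel_cat // ltnW.
by rewrite hT // nth_cat lt_is.
Qed.

Lemma node_path_eq (I1 I2 : seq bool -> bool) s :
  I1 =1 I2 -> node_path I1 s -> node_path I2 s.
Proof. by move=> eI [prefixes leaf]; split=> [i /prefixes|]; rewrite -eI. Qed.

Lemma node_path_depth d s : node_path (fun u => size u < d) s <-> size s = d.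
Proof.
split=> [[prefixes leaf] | <-]; last first.
  by split=> [i lt_is|]; rewrite ?size_takel ?ltnn // ltnW.
apply/eqP; rewrite eqn_leq [d <= _]leqNgt leaf andbT leqNgt.
apply/negP => lt_ds.
by have := prefixes d lt_ds; rewrite size_takel ?ltnn // ltnW.
Qed.

Lemma AL_internal_mono w1 w2 d1 d2 u : w1 <= w2 -> d1 <= d2 ->
  AL_internal w1 d1 u -> AL_internal w2 d2 u.
Proof. by move=> le_w le_d /andP[? ?]; apply/andP; split; lia. Qed.

Lemma AL_internal_wide w d : d <= w -> AL_internal w d =1 (fun u => size u < d).
Proof.
move=> le_dw u; rewrite /AL_internal; case: ltnP => //= lt_ud.
exact: leq_trans (leq_ltn_trans (count_size id u) lt_ud) le_dw.
Qed.

Lemma AL_path_size w d s : node_path (AL_internal w d) s -> size s <= d.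
Proof.
move=> [prefixes _]; rewrite leqNgt; apply/negP => lt_ds.
by have := prefixes d lt_ds; rewrite /AL_internal size_takel ?ltnn // ltnW.
Qed.

Lemma AL_path_extend w1 w2 d1 d2 s : w1 <= w2 -> d1 <= d2 ->
  node_path (AL_internal w1 d1) s ->
  exists t, node_path (AL_internal w2 d2) (s ++ t).
Proof.
move=> le_w le_d path_s; have le_sd := AL_path_size path_s.
case: (ltnP (count id s) w2) => [lt_cw | le_wc].
- exists (nseq (d2 - size s) false).
  have size_st : size (s ++ nseq (d2 - size s) false) = d2.
    by rewrite size_cat size_nseq; lia.
  have count_st : count id (s ++ nseq (d2 - size s) false) = count id s.
    by rewrite count_cat count_nseq mul0n addn0.
  split=> [i|]; rewrite /AL_internal size_st ?ltnn // => lt_id.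
  rewrite size_takel ?lt_id /=; last by rewrite size_st ltnW.
  by rewrite (leq_ltn_trans (leq_count_subseq id (take_subseq _ i))) ?count_st.
- exists [::]; rewrite cats0; split=> [i /path_s.1|].
    exact: AL_internal_mono.
  by rewrite /AL_internal [count _ _ < _]ltnNge le_wc andbF.
Qed.

Definition AL_shatterable w d := exists T : AL_tree X w d, AL_shattered H T.

Definition L_shatterable d := exists T : L_tree X d, L_shattered H T.

Lemma AL_shatterable_mono w1 w2 d1 d2 : w1 <= w2 -> d1 <= d2 ->
  AL_shatterable w2 d2 -> AL_shatterable w1 d1.
Proof.
move=> le_w le_d [T shT].
have sub u : AL_internal w1 d1 u -> AL_internal w2 d2 u.
  exact: AL_internal_mono.
exists (fun u Hu => T u (sub u Hu)).
exact: (@shatters_restrict _ _ sub T (fun s => AL_path_extend le_w le_d) shT).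
Qed.

Lemma AL_shatterable_wide w d :
  d <= w -> AL_shatterable w d <-> L_shatterable d.
Proof.
move=> le_dw; have eI := AL_internal_wide le_dw.
have extend I1 I2 (e12 : I1 =1 I2) s :
    node_path I1 s -> exists t, node_path I2 (s ++ t).
  by exists [::]; rewrite cats0; apply: node_path_eq e12 _.
split=> [[T shT] | [T shT]].
- have sub u : size u < d -> AL_internal w d u by rewrite eI.
  exists (fun u Hu => T u (sub u Hu)) => s /node_path_depth path_s.
  exact: (@shatters_restrict _ _ sub T (extend _ _ (fsym eI)) shT s path_s).
- have sub u : AL_internal w d u -> size u < d by rewrite eI.
  exists (fun u Hu => T u (sub u Hu)).
  apply: (@shatters_restrict _ _ sub T (extend _ _ eI)) => s /node_path_depth.
  exact: shT.
Qed.

Lemma L_shatterable_AL w d : L_shatterable d -> AL_shatterable w d.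
Proof.
move=> /(AL_shatterable_wide (leq_maxr w d)).
exact: AL_shatterable_mono (leq_maxl w d) (leqnn d).
Qed.

Lemma ALdim_antimono w1 w2 : w1 <= w2 -> ele (ALdim H w2) (ALdim H w1).
Proof. by move=> le_w; apply: sup_dim_le => d; apply: AL_shatterable_mono. Qed.

Lemma ALdim_ge_min_Ldim w : ele (emin (Some w) (Ldim H)) (ALdim H w).
Proof.
case EA: (ALdim H w) => [a|]; last by case: (emin _ _).
have [_ le_a] := sup_dim_Some EA.
case EL: (Ldim H) => [L|] /=.
  have [[PL | ->] _] := sup_dim_Some EL; last by rewrite minn0.
  exact: leq_trans (geq_minr w L) (le_a _ (L_shatterable_AL w PL)).
have [d /(L_shatterable_AL w) /le_a le_da lt_wd] := sup_dim_None EL w.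
exact: leq_trans (ltnW lt_wd) le_da.
Qed.

Lemma ALdim_wide L w : Ldim H = Some L -> L < w -> ALdim H w = Some L.
Proof.
move=> EL lt_Lw; have [PL le_L] := sup_dim_Some EL.
apply: sup_dim_eq => [d | ]; last first.
  by case: PL => [/(L_shatterable_AL w) | ]; [right | left].
case: (leqP d w) => [le_dw /(AL_shatterable_wide le_dw) /le_L // | lt_wd].
move=> /(AL_shatterable_mono (leqnn w) (ltnW lt_wd)).
by move=> /(AL_shatterable_wide (leqnn w)) /le_L; lia.
Qed.

Lemma Wdim_le_Ldim_succ L : Ldim H = Some L -> ele (Wdim H) (Some L.+1).
Proof. by move=> EL; apply: inf_dim_le; rewrite (ALdim_wide EL (ltnSn L)). Qed.

Lemma Wdim_finite_Ldim_finite : Wdim H <> None -> Ldim H <> None.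
Proof.
move=> /inf_dim_neq_None [w [_]]; case EA: (ALdim H w) => [a|] // _ EL.
have [_ le_a] := sup_dim_Some EA.
have [d /(L_shatterable_AL w) /le_a] := sup_dim_None EL a.
by rewrite leqNgt => /negP.
Qed.

End Shattering.

Theorem lemma1 (X : Type) (H : (X -> bool) -> Prop) :
  (* (i) *)
  (forall w1 w2 : nat, 0 < w1 -> w1 < w2 -> ele (ALdim H w2) (ALdim H w1)) /\
  (* (ii) *)
  (forall w : nat, 0 < w -> ele (emin (Some w) (Ldim H)) (ALdim H w)) /\
  (* (iii) *)
  (forall L : nat, Ldim H = Some L ->
     forall w : nat, L + 1 <= w -> ALdim H w = Some L) /\
  (* (iv) *)
  (forall L : nat, Ldim H = Some L -> ele (Wdim H) (Some (L + 1))) /\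
  (* (v) *)
  (Wdim H <> None <-> Ldim H <> None).
Proof.
split; first by move=> w1 w2 _ /ltnW; apply: ALdim_antimono.
split; first by move=> w _; apply: ALdim_ge_min_Ldim.
split; first by move=> L EL w; rewrite addn1; apply: ALdim_wide.
split; first by move=> L EL; rewrite addn1; apply: Wdim_le_Ldim_succ.
split; first exact: Wdim_finite_Ldim_finite.
by case EL: (Ldim H) => [L|] // _; have := Wdim_le_Ldim_succ EL; case: (Wdim H).
Qed.
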